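(* Let $I\subseteq\mathbb{Z}$ be an infinite interval, let $(\underline{n},\underline{c})$ be a type of level $l$, and let $\lambda\in\Lambda_{I;\underline{n},\underline{c}}$. Let $J\subset I$ be a finite subinterval such that $|J_+|\geq 2\max(\underline{n})$ and $\lambda_{ij}=c_i$ for all $1\leq i\leq l$ and all $j\in I_+\setminus J_+$. Let $\lambda_J\in\Lambda_{J;\underline{n},\underline{c}}$ be the submatrix $(\lambda_{ij})_{1\leq i\leq l,\,j\in J_+}$ and $\kappa_J:=\kappa_{J;\underline{n},\underline{c}}$. For $j\in J_+$ let $k_j$ (resp. $l_j$) be the number of entries equal to $1$ in column $j$ of $\kappa_J$ (resp. of $\lambda_J$). Then the natural number $$\operatorname{def}(\lambda):=\tfrac12\sum_{j\in J_+}(k_j^2-l_j^2)$$ is independent of the particular choice of such $J$.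
   Context: For an interval $I\subseteq\mathbb{Z}$ put $I_+:=I\cup(I+1)$. A type of level $l$ is a pair $(\underline{n},\underline{c})$ with $\underline{n}=(n_1,\dots,n_l)\in\mathbb{N}^l$ and $\underline{c}=(c_1,\dots,c_l)\in\{0,1\}^l$. $\Lambda_{I;\underline{n},\underline{c}}$ is the set of $01$-matrices $\lambda=(\lambda_{ij})_{1\leq i\leq l,\,j\in I_+}$ such that, for each $i$, exactly $n_i$ of the entries $\lambda_{ij}$ ($j\in I_+$) are different from $c_i$. For a finite interval $J$, $\kappa_{J;\underline{n},\underline{c}}$ denotes the element of $\Lambda_{J;\underline{n},\underline{c}}$ in which, in every row, all entries equal to $1$ are as far to the left as possible. (Equivalently $\operatorname{def}(\lambda)=\frac12(|\kappa_J|\cdot|\kappa_J|-|\lambda_J|\cdot|\lambda_J|)$ for the weights of the corresponding basis vectors.) *)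

From mathcomp Require Import all_boot all_order all_algebra.
Set Implicit Arguments. Unset Strict Implicit. Unset Printing Implicit Defensive.
Import Order.TTheory GRing.Theory Num.Theory.

Local Open Scope ring_scope.

Definition inI (lo hi : option int) (j : int) : bool :=
  (if lo is Some a then a <= j else true) && (if hi is Some b then j <= b else true).

Definition infinite_interval (lo hi : option int) : bool :=
  ~~ (isSome lo && isSome hi).

Definition inIp (lo hi : option int) (j : int) : bool :=
  inI lo hi j || inI lo hi (j - 1).

(* A 01-matrix indexed by 'I_l x Z (true = 1); only entries in I_+ matter.
   lam is in Lambda_{I;n,c}: for each row i, exactly n_i entries j in I_+
   have lam i j <> c i. *)
Definition inLambda (lo hi : option int) (l : nat) (n : 'I_l -> nat)
  (c : 'I_l -> bool) (lam : 'I_l -> int -> bool) : Prop :=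
  forall i : 'I_l, exists s : seq int,
    [/\ uniq s, size s = n i &
        forall j : int, (inIp lo hi j && (lam i j != c i)) = (j \in s)].

(* The finite interval J = {a, ..., a + m - 1} (m = |J|, possibly empty);
   Jplus a m lists J_+ = J \cup (J+1) in increasing order. *)
Definition Jplus (a : int) (m : nat) : seq int :=
  if m == 0%N then [::] else [seq a + k%:Z | k <- iota 0 m.+1].

Definition J_sub_I (lo hi : option int) (a : int) (m : nat) : Prop :=
  forall k : nat, (k < m)%N -> inI lo hi (a + k%:Z).

Definition admissibleJ (lo hi : option int) (l : nat) (n : 'I_l -> nat)
  (c : 'I_l -> bool) (lam : 'I_l -> int -> bool) (a : int) (m : nat) : Prop :=
  [/\ J_sub_I lo hi a m,
      (2 * \max_(i < l) n i <= size (Jplus a m))%N &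
      forall (i : 'I_l) (j : int), inIp lo hi j -> j \notin Jplus a m ->
        lam i j = c i].

(* kappa_J: in row i, the entries equal to 1 are the leftmost ones; the
   number of 1's in row i is n_i if c_i = 0 and |J_+| - n_i if c_i = 1.
   kappaJ i p is the entry at the p-th position (0-based) of J_+. *)
Definition kappaJ (l : nat) (n : 'I_l -> nat) (c : 'I_l -> bool)
  (a : int) (m : nat) (i : 'I_l) (p : nat) : bool :=
  (p < (if c i then size (Jplus a m) - n i else n i))%N.

Definition kcol (l : nat) (n : 'I_l -> nat) (c : 'I_l -> bool)
  (a : int) (m : nat) (p : nat) : nat :=
  #|[set i : 'I_l | kappaJ n c a m i p]|.

Definition lcol (l : nat) (lam : 'I_l -> int -> bool) (j : int) : nat :=
  #|[set i : 'I_l | lam i j]|.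

Definition twice_def (l : nat) (n : 'I_l -> nat) (c : 'I_l -> bool)
  (lam : 'I_l -> int -> bool) (a : int) (m : nat) : int :=
  \sum_(p < size (Jplus a m))
    ((kcol n c a m p ^ 2)%N%:Z - (lcol lam (nth (0 : int) (Jplus a m) p) ^ 2)%N%:Z).

From mathcomp Require Import all_boot all_algebra zify.
Import GRing.Theory.

Set Implicit Arguments.
Unset Strict Implicit.
Unset Printing Implicit Defensive.

(* Counting k_j^2 and l_j^2 as numbers of ordered pairs of rows having a 1 in
   column j turns 2 def(lambda) into a sum over pairs of rows (i, i') of the
   number of columns where both rows of kappa_J have a 1, minus the same number
   for lambda_J.  Let T_i be the set of columns where row i of lambda differs
   from c_i.  Since |J_+| >= n_i + n_i', this difference is
   min(n_i, n_i') - |T_i ∩ T_i'| if c_i = c_i' and |T_i ∩ T_i'| otherwise,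
   which does not depend on J.  It is symmetric in (i, i') and vanishes on the
   diagonal, so the sum is twice a natural number. *)

Lemma card_ord_ltn N r : r <= N -> #|[set p : 'I_N | p < r]| = r.
Proof.
move=> rN; have widen_inj : injective (widen_ord rN).
  by move=> x y /(congr1 val) /= /val_inj.
rewrite -[RHS]card_ord -(card_imset _ widen_inj).
apply: eq_card => p; rewrite !inE.
apply/idP/imsetP => [pr | [q _ ->] /=]; last exact: ltn_ord.
by exists (Ordinal pr); rewrite ?inE //; apply: val_inj.
Qed.

Lemma card_ord_ltn_ltn N r1 r2 : r1 <= N -> r2 <= N ->
  #|[set p : 'I_N | (p < r1) && (p < r2)]| = minn r1 r2.
Proof.
move=> r1N r2N; rewrite -(@card_ord_ltn N (minn r1 r2)) ?geq_min ?r1N //.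
by apply: eq_card => p; rewrite !inE leq_min.
Qed.

Lemma card_set_sum (T : finType) (P : pred T) : #|[set x | P x]| = \sum_x P x.
Proof. by rewrite cardsE -sum1_card big_mkcond. Qed.

Lemma sum_sqr_card (I T : finType) (R : I -> T -> bool) :
  \sum_p #|[set i | R p i]| ^ 2 = \sum_i \sum_j #|[set p | R p i && R p j]|.
Proof.
under eq_bigr => p _ do rewrite card_set_sum expnS expn1 big_distrl /=.
under eq_bigr => p _ do under eq_bigr => i _ do rewrite big_distrr /=.
rewrite exchange_big; apply: eq_bigr => i _; rewrite exchange_big.
apply: eq_bigr => j _; rewrite card_set_sum.
by apply: eq_bigr => p _; case: (R p i); case: (R p j).
Qed.

Lemma card_preim_uniq (T : finType) (U : eqType) (f : T -> U) (s : seq U) :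
  injective f -> uniq s -> {subset s <= codom f} ->
  #|[set x | f x \in s]| = size s.
Proof.
move=> f_inj s_uniq s_sub; rewrite -(size_image f); apply/eqP.
have image_uniq : uniq [seq f x | x in [set x | f x \in s]].
  by rewrite map_inj_uniq ?enum_uniq.
rewrite -(uniq_size_uniq s_uniq) // => y.
apply/idP/imageP => [ys | [x] ]; last by rewrite inE => ? ->.
by have /codomP [x fx] := s_sub y ys; exists x; rewrite ?inE -fx.
Qed.

Lemma sum_sym_diag0 l (F : 'I_l -> 'I_l -> nat) :
  (forall i j, F i j = F j i) -> (forall i, F i i = 0) ->
  \sum_i \sum_j F i j = 2 * \sum_(i < l) \sum_(j < l | i < j) F i j.
Proof.
move=> F_sym F_diag.
have split_row i : \sum_j F i j =
    \sum_(j < l) (if i < j then F i j else 0)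
    + \sum_(j < l) (if j < i then F j i else 0).
  rewrite -big_split; apply: eq_bigr => j _ /=.
  case: ltngtP => [_ | _ | /val_inj ->]; rewrite ?F_diag ?addn0 //.
rewrite (eq_bigr _ (fun i _ => split_row i)) big_split /=.
rewrite [X in _ + X]exchange_big mul2n -addnn.
by under [in RHS]eq_bigr do rewrite big_mkcond.
Qed.

Lemma card_xor_overlap N (X Y : {set 'I_N}) (cX cY : bool) :
  #|X| + #|Y| <= N ->
  #|[set p : 'I_N | (p < (if cX then N - #|X| else #|X|))
                 && (p < (if cY then N - #|Y| else #|Y|))]| =
  #|[set p | (cX (+) (p \in X)) && (cY (+) (p \in Y))]|
  + (if cX == cY then minn #|X| #|Y| - #|X :&: Y| else #|X :&: Y|).
Proof.
move=> XYN; have XIY_leX := subset_leq_card (subsetIl X Y).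
have XIY_leY := subset_leq_card (subsetIr X Y).
rewrite card_ord_ltn_ltn; [|by case: cX; lia|by case: cY; lia].
have -> : [set p | (cX (+) (p \in X)) && (cY (+) (p \in Y))] =
          (if cX then ~: X else X) :&: (if cY then ~: Y else Y).
  by apply/setP => p; case: cX; case: cY; rewrite !inE.
have cardCU := cardsC (X :|: Y); rewrite setCU card_ord in cardCU.
have cardUI := cardsUI X Y.
have cardDX : #|~: X :&: Y| = #|Y| - #|X :&: Y|.
  by rewrite setIC -setDE cardsD setIC.
have cardDY : #|X :&: ~: Y| = #|X| - #|X :&: Y| by rewrite -setDE cardsD.
(* The cardinals are generalized before calling lia, which would otherwise
   treat convertible but syntactically different copies as distinct atoms. *)
case: cX; case: cY => /=;
  move: cardCU cardUI cardDX cardDY XYN XIY_leX XIY_leY;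
  move: #|X| #|Y| #|X :&: Y| #|X :|: Y| #|~: X :&: ~: Y| #|~: X :&: Y| #|X :&: ~: Y|;
  lia.
Qed.

Lemma count_mem_uniqC (T : eqType) (s t : seq T) :
  uniq s -> uniq t -> count (mem t) s = count (mem s) t.
Proof.
move=> s_uniq t_uniq; rewrite -!size_filter; apply/perm_size/uniq_perm.
- exact: filter_uniq.
- exact: filter_uniq.
- by move=> x; rewrite !mem_filter andbC.
Qed.

Local Open Scope ring_scope.

Lemma Jplus_window a m :
  Jplus a m = [seq a + k%:Z | k <- iota 0 (size (Jplus a m))].
Proof. by rewrite /Jplus; case: eqP => // _; rewrite size_map size_iota. Qed.

Lemma nth_Jplus a m p :
  (p < size (Jplus a m))%N -> nth 0 (Jplus a m) p = a + p%:Z.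
Proof.
by move=> pN; rewrite {1}Jplus_window (nth_map 0%N) ?size_iota // nth_iota.
Qed.

Lemma Jplus_inIp lo hi a m p :
  J_sub_I lo hi a m -> (p < size (Jplus a m))%N -> inIp lo hi (a + p%:Z).
Proof.
rewrite /Jplus /inIp; case: m => [|m] // J_sub /=.
rewrite size_map size_iota ltnS leq_eqVlt => /orP [/eqP -> | pm].
- apply/orP; right; rewrite (_ : a + m.+1%:Z - 1 = a + m%:Z); last by lia.
  exact: J_sub.
- by rewrite (J_sub p pm).
Qed.

Section RowSupports.

Variables (lo hi : option int) (l : nat) (n : 'I_l -> nat) (c : 'I_l -> bool).
Variables (lam : 'I_l -> int -> bool) (T : 'I_l -> seq int).
Hypothesis T_spec : forall i, [/\ uniq (T i), size (T i) = n i &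
  forall j, (inIp lo hi j && (lam i j != c i)) = (j \in T i)].

Definition overlap i j := count (mem (T j)) (T i).

Definition pair_defect i j : nat :=
  if c i == c j then (minn (n i) (n j) - overlap i j)%N else overlap i j.

Lemma pair_defect_sym i j : pair_defect i j = pair_defect j i.
Proof.
have [ui _ _] := T_spec i; have [uj _ _] := T_spec j.
by rewrite /pair_defect /overlap eq_sym minnC (count_mem_uniqC ui uj).
Qed.

Lemma pair_defect_diag i : pair_defect i i = 0%N.
Proof.
have [_ size_Ti _] := T_spec i.
rewrite /pair_defect /overlap eqxx minnn (eq_in_count (a2 := predT)) //.
by rewrite count_predT size_Ti subnn.
Qed.

Lemma twice_def_pair_defects a m :
  admissibleJ lo hi n c lam a m ->
  twice_def n c lam a m = (\sum_i \sum_j pair_defect i j)%:Z.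
Proof.
case=> J_sub maxN outside; set N := size (Jplus a m) in maxN *.
pose shift (p : 'I_N) := a + p%:Z.
pose X i := [set p | shift p \in T i].
have shift_inj : injective shift.
  by move=> p q /addrI /eqP; rewrite eqz_nat => /eqP /val_inj.
have T_window i : {subset T i <= codom shift}.
  move=> x xT; have [_ _ T_def] := T_spec i.
  have /andP [xI lam_x] : inIp lo hi x && (lam i x != c i) by rewrite T_def.
  have : x \in Jplus a m.
    by apply/negPn/negP => /(outside i x xI) lam_c; rewrite lam_c eqxx in lam_x.
  rewrite {1}Jplus_window => /mapP [k]; rewrite mem_iota add0n => kN ->.
  exact: (codom_f shift (Ordinal kN)).
have card_X i : #|X i| = n i.
  have [T_uniq size_T _] := T_spec i.
  by rewrite (card_preim_uniq shift_inj T_uniq (T_window i)).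
have card_XI i j : #|X i :&: X j| = overlap i j.
  have [T_uniq _ _] := T_spec i.
  rewrite /overlap -size_filter -(card_preim_uniq shift_inj) ?filter_uniq //.
  - by apply: eq_card => p; rewrite !inE mem_filter andbC.
  - by move=> x; rewrite mem_filter => /andP [_ /T_window].
have lam_window i (p : 'I_N) :
    lam i (Jplus a m)`_p = c i (+) (shift p \in T i).
  have [_ _ T_def] := T_spec i.
  rewrite nth_Jplus // -T_def (Jplus_inIp J_sub) //=.
  by case: (lam i _); case: (c i).
have kappa_lambda i j :
    #|[set p : 'I_N | kappaJ n c a m i p && kappaJ n c a m j p]| =
    (#|[set p : 'I_N | lam i (Jplus a m)`_p && lam j (Jplus a m)`_p]|
     + pair_defect i j)%N.
  have n_le i' : (2 * n i' <= N)%N.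
    by apply: leq_trans maxN; rewrite leq_mul2l (leq_bigmax i') orbT.
  rewrite /kappaJ -/N -!card_X card_xor_overlap; last first.
    by rewrite !card_X; have := n_le i; have := n_le j; lia.
  have -> : [set p | c i (+) (p \in X i) & c j (+) (p \in X j)] =
            [set p : 'I_N | lam i (Jplus a m)`_p & lam j (Jplus a m)`_p].
    by apply/setP => p; rewrite !inE !lam_window.
  by rewrite /pair_defect -!card_X card_XI.
rewrite /twice_def -/N sumrB -!(big_morph Posz PoszD (erefl 0%:Z)) /kcol /lcol.
rewrite (sum_sqr_card (fun (p : 'I_N) i => kappaJ n c a m i p)).
rewrite (sum_sqr_card (fun (p : 'I_N) i => lam i (Jplus a m)`_p)).
under eq_bigr => i _ do under eq_bigr => j _ do rewrite kappa_lambda.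
under eq_bigr => i _ do rewrite big_split /=.
by rewrite big_split /= PoszD addrAC subrr add0r.
Qed.

End RowSupports.

Theorem lemma2p2 (lo hi : option int) (Hinf : infinite_interval lo hi)
  (l : nat) (n : 'I_l -> nat) (c : 'I_l -> bool) (lam : 'I_l -> int -> bool)
  (Hlam : inLambda lo hi n c lam) :
  exists d : nat, forall (a : int) (m : nat),
    admissibleJ lo hi n c lam a m ->
    twice_def n c lam a m = (2 * d)%N%:Z.
Proof.
have [T T_spec] := fin_all_exists Hlam.
exists (\sum_(i < l) \sum_(j < l | (i < j)%N) pair_defect n c T i j) => a m J_adm.
rewrite (twice_def_pair_defects T_spec J_adm) sum_sym_diag0 //.
- exact: pair_defect_sym.
- exact: pair_defect_diag.
Qed.
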